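(* Consider a Kepler billiard in the plane $\mathbb{R}^2$: a particle moves under a Kepler(-Coulomb) potential centered at a point $F$, and is elastically reflected at a wall $\mathbf{K}$ which is a branch of a non-degenerate conic section having $F$ as a focus. Assume the total energy is non-zero, so that every Keplerian arc is an arc of a conic with one focus at $F$ and a well-defined semi-major axis $a$ (preserved under reflections), and each arc is determined up to orientation by its second focus. Let $F_1,F_2,\dots$ be the sequence of second foci of the successive Keplerian arcs along a billiard trajectory. Then: (i) if $\mathbf{K}$ is an ellipse or a branch of a hyperbola with foci $F$ and $F'$, all the points $F_i$ lie on one circle centered at $F'$; (ii) if $\mathbf{K}$ is a parabola with focus $F$, all the points $F_i$ lie on one line perpendicular to the axis of symmetry of the parabola.
   Context: Elastic reflection means the velocity is reflected with respect to the tangent line of $\mathbf{K}$ at the point of impact, preserving the energy. For an elliptic Keplerian orbit with semi-major axis $a$, the second focus $F_i$ is the point such that the orbit is the ellipse $\{P: |PF|+|PF_i|=2a\}$; for hyperbolic orbits it is the other focus of the hyperbola containing the arc. *)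

From Stdlib Require Export Reals.
From Coquelicot Require Export Coquelicot.
Open Scope R_scope.

Definition pt := (R * R)%type.
Definition dot (u v : pt) : R := fst u * fst v + snd u * snd v.
Definition vsub (u v : pt) : pt := (fst u - fst v, snd u - snd v).
Definition vnorm (u : pt) : R := sqrt (dot u u).
Definition dist (P Q : pt) : R := vnorm (vsub P Q).

Definition vel (g : R -> pt) (t : R) : pt :=
  (Derive (fun s => fst (g s)) t, Derive (fun s => snd (g s)) t).

(* Kepler(-Coulomb) motion with centre F and coupling k (potential -k/|q-F|,
   k > 0 attractive, k < 0 repulsive), unit mass:
     q'' = - k (q - F) / |q - F|^3.
   [kepler_arc k F g t0 t1]: g solves this equation on an open time interval
   containing [t0, t1], avoiding the centre F. *)
Definition kepler_arc (k : R) (F : pt) (g : R -> pt) (t0 t1 : R) : Prop :=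
  exists a b, a < t0 /\ t1 < b /\
    forall t, a < t < b ->
      g t <> F /\
      ex_derive (fun s => fst (g s)) t /\
      ex_derive (fun s => snd (g s)) t /\
      is_derive (fun s => Derive (fun u => fst (g u)) s) t
        (- k * (fst (g t) - fst F) / (dist (g t) F) ^ 3) /\
      is_derive (fun s => Derive (fun u => snd (g u)) s) t
        (- k * (snd (g t) - snd F) / (dist (g t) F) ^ 3).

Definition energy (k : R) (F : pt) (g : R -> pt) (t : R) : R :=
  dot (vel g t) (vel g t) / 2 - k / dist (g t) F.

Definition semi_major (k E : R) : R := Rabs k / (2 * Rabs E).

(* F2 is the second focus of the Keplerian arc g|[t0,t1] of energy E:
   elliptic case (E < 0): the arc lies on { P : |PF| + |PF2| = 2a };
   hyperbolic case (E > 0): the arc lies on the branch of the hyperbola with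
   foci F, F2 and semi-major axis a on which Kepler arcs move (the branch
   around F if attractive, the other branch if repulsive). *)
Definition second_focus (k : R) (F : pt) (E : R) (g : R -> pt) (t0 t1 : R)
    (F2 : pt) : Prop :=
  forall t, t0 <= t <= t1 ->
    (E < 0 -> dist (g t) F + dist (g t) F2 = 2 * semi_major k E) /\
    (0 < E -> 0 < k -> dist (g t) F2 - dist (g t) F = 2 * semi_major k E) /\
    (0 < E -> k < 0 -> dist (g t) F - dist (g t) F2 = 2 * semi_major k E).

Definition tangent_vec (K : pt -> Prop) (P w : pt) : Prop :=
  w <> (0, 0) /\
  exists (gam : R -> pt) (eps : R), 0 < eps /\
    (forall s, Rabs s < eps -> K (gam s)) /\ gam 0 = P /\
    is_derive (fun s => fst (gam s)) 0 (fst w) /\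
    is_derive (fun s => snd (gam s)) 0 (snd w).

Definition reflect (w v : pt) : pt :=
  (2 * dot v w / dot w w * fst w - fst v, 2 * dot v w / dot w w * snd w - snd v).

(* A Kepler billiard trajectory with arcs 0..N: arc i is g i on [t i, t (S i)];
   between impacts the particle does not meet the wall K; at the impact time
   t (S i) (i < N) the point lies on K and the velocity is elastically
   reflected with respect to the tangent line of K. *)
Definition billiard_traj (k : R) (F : pt) (K : pt -> Prop) (N : nat)
    (t : nat -> R) (g : nat -> R -> pt) : Prop :=
  (forall i, (i <= N)%nat ->
     t i < t (S i) /\ kepler_arc k F (g i) (t i) (t (S i)) /\
     (forall s, t i < s < t (S i) -> ~ K (g i s))) /\
  (forall i, (i < N)%nat ->
     g i (t (S i)) = g (S i) (t (S i)) /\ K (g i (t (S i))) /\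
     exists w, tangent_vec K (g i (t (S i))) w /\
       vel (g (S i)) (t (S i)) = reflect w (vel (g i) (t (S i)))).

Definition ellipse_wall (F F' : pt) (K : pt -> Prop) : Prop :=
  exists b, dist F F' < 2 * b /\ forall P, K P <-> dist P F + dist P F' = 2 * b.

Definition hyperbola_branch_wall (F F' : pt) (K : pt -> Prop) : Prop :=
  exists b, 0 < b /\ 2 * b < dist F F' /\
    ((forall P, K P <-> dist P F - dist P F' = 2 * b) \/
     (forall P, K P <-> dist P F' - dist P F = 2 * b)).

(* Parabola with focus F and directrix { X : (X - D).n = 0 }; its axis of
   symmetry has direction n. *)
Definition parabola_wall (F D n : pt) (K : pt -> Prop) : Prop :=
  n <> (0, 0) /\ dot (vsub F D) n <> 0 /\
  forall P, K P <-> dist P F = Rabs (dot (vsub P D) n) / vnorm n.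

(* Along a Kepler arc of energy E <> 0 with centre F, the second focus is F + A/E, where
   A = |v|^2 x - (x.v) v - k x/|x| is the Laplace-Runge-Lenz vector of the state (x, v),
   x = q - F; it is forced by the second-order contact of the arc with its conic.
   At an impact point P the reflection v |-> v' keeps |v|, so the second focus moves by
   ((x.v') v' - (x.v) v)/E, while P stays equidistant from the old and the new focus.
   The reflection in the tangent of a wall with foci F, F' swaps the directions of P - F
   and F' - P (for a parabola: of P - F and the axis n), so (x.v)(y.v) is invariant for
   y = F' - P (resp. y = n). This is exactly what keeps the distance from F' (resp. the
   component along n) of the second focus unchanged. *)

From Stdlib Require Import Lra Psatz Lia.

(* Stated eta-expanded, to match the terms produced by [auto_derive]. *)
Lemma Derive_eta (f : R -> R) x l : is_derive f x l -> Derive (fun y => f y) x = l.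
Proof. exact (is_derive_unique f x l). Qed.

Ltac derive_from_hyps :=
  auto_derive;
  [ repeat split; try assumption; try (eexists; eassumption); try lra
  | repeat match goal with
    | H : is_derive ?f ?x _ |- context [Derive (fun y => ?f y) ?x] =>
        rewrite (Derive_eta _ _ _ H)
    end ].

(** * Calculus *)

Lemma is_derive_eq0_on_const (f : R -> R) t0 t1 x l :
  t0 < t1 -> t0 <= x <= t1 -> (forall s, t0 <= s <= t1 -> f s = f x) ->
  is_derive f x l -> l = 0.
Proof.
  intros H01 Hx Hconst Hd. apply is_derive_Reals in Hd.
  destruct (Req_dec l 0) as [|Hl]; [assumption | exfalso].
  destruct (Hd (Rabs l) (Rabs_pos_lt _ Hl)) as [del Hdel].
  assert (Hh : exists h, h <> 0 /\ Rabs h < del /\ t0 <= x + h <= t1).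
  { pose proof (cond_pos del).
    destruct (Rlt_le_dec x t1) as [Hlt | Hge].
    - pose proof (Rmin_l del (t1 - x)); pose proof (Rmin_r del (t1 - x)).
      assert (0 < Rmin del (t1 - x)) by (apply Rmin_pos; lra).
      exists (Rmin del (t1 - x) / 2). rewrite Rabs_pos_eq by lra. lra.
    - pose proof (Rmin_l del (t1 - t0)); pose proof (Rmin_r del (t1 - t0)).
      assert (0 < Rmin del (t1 - t0)) by (apply Rmin_pos; lra).
      exists (- (Rmin del (t1 - t0) / 2)). rewrite Rabs_Ropp, Rabs_pos_eq by lra. lra. }
  destruct Hh as (h & Hh0 & Hhdel & Hxh).
  specialize (Hdel h Hh0 Hhdel).
  rewrite (Hconst (x + h) Hxh) in Hdel.
  replace ((f x - f x) / h - l) with (- l) in Hdel by (field; exact Hh0).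
  rewrite Rabs_Ropp in Hdel. lra.
Qed.

Lemma is_derive2_eq0_on_const (f df : R -> R) t0 t1 T l :
  t0 < t1 -> t0 <= T <= t1 -> (forall s, t0 <= s <= t1 -> f s = f T) ->
  (forall s, t0 <= s <= t1 -> is_derive f s (df s)) -> is_derive df T l ->
  df T = 0 /\ l = 0.
Proof.
  intros H01 HT Hconst Hdf Hddf.
  assert (Hdf0 : forall s, t0 <= s <= t1 -> df s = 0).
  { intros s Hs.
    apply (is_derive_eq0_on_const f t0 t1 s); [exact H01 | exact Hs | | exact (Hdf s Hs)].
    intros u Hu. rewrite (Hconst u Hu), (Hconst s Hs). reflexivity. }
  split; [exact (Hdf0 T HT) |].
  apply (is_derive_eq0_on_const df t0 t1 T); [exact H01 | exact HT | | exact Hddf].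
  intros u Hu. rewrite (Hdf0 u Hu), (Hdf0 T HT). reflexivity.
Qed.

Lemma const_of_is_derive_eq0 (f : R -> R) t0 t1 :
  (forall t, t0 <= t <= t1 -> is_derive f t 0) -> forall t, t0 <= t <= t1 -> f t = f t0.
Proof.
  intros Hd t Ht. destruct (Req_dec t t0) as [-> | Hne]; [reflexivity |].
  symmetry. apply eq_is_derive; [intros s Hs; apply Hd | ]; lra.
Qed.

Lemma is_derive_sub_const (f : R -> R) c x l : is_derive f x l -> is_derive (fun s => f s - c) x l.
Proof. intros Hf. derive_from_hyps. ring. Qed.

Lemma is_derive_sqrt_sum_sq (X Y : R -> R) s dX dY :
  is_derive X s dX -> is_derive Y s dY -> 0 < X s * X s + Y s * Y s ->
  is_derive (fun u => sqrt (X u * X u + Y u * Y u)) s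
    ((X s * dX + Y s * dY) / sqrt (X s * X s + Y s * Y s)).
Proof.
  intros HX HY Hpos. derive_from_hyps.
  assert (0 < sqrt (X s * X s + Y s * Y s)) by (apply sqrt_lt_R0; lra).
  field. lra.
Qed.

(** * Plane geometry *)

Definition vadd (u v : pt) : pt := (fst u + fst v, snd u + snd v).
Definition scale (c : R) (u : pt) : pt := (c * fst u, c * snd u).

Lemma dot_self_pos u : u <> (0, 0) -> 0 < dot u u.
Proof.
  destruct u as [u1 u2]; unfold dot; cbn [fst snd]; intros Hu.
  destruct (Req_dec u1 0) as [-> | H1]; destruct (Req_dec u2 0) as [-> | H2];
    [congruence | nra | nra | nra].
Qed.

Lemma vsub_neq0 P Q : P <> Q -> vsub P Q <> (0, 0).
Proof.
  destruct P as [p1 p2], Q as [q1 q2]; unfold vsub; cbn [fst snd]. intros Hne Heq.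
  injection Heq as E1 E2. apply Hne. f_equal; lra.
Qed.

Lemma dist_pos P Q : P <> Q -> 0 < dist P Q.
Proof. intros Hne. apply sqrt_lt_R0, dot_self_pos, vsub_neq0, Hne. Qed.

Lemma dist_sq P Q : dist P Q ^ 2 = dot (vsub P Q) (vsub P Q).
Proof. apply pow2_sqrt. unfold dot. nra. Qed.

Lemma dist_sym P Q : dist P Q = dist Q P.
Proof. unfold dist, vnorm, dot, vsub; cbn [fst snd]. f_equal. ring. Qed.

Lemma dist_self P : dist P P = 0.
Proof.
  unfold dist, vnorm, dot, vsub; cbn [fst snd].
  rewrite !Rminus_diag, Rmult_0_l, Rplus_0_l. exact sqrt_0.
Qed.

Lemma dist_eq_of_perp_bisector P Q Q' X : dist P Q' ^ 2 = dist P Q ^ 2 ->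
  dot (vsub Q' Q) (vsub X P) = 0 -> dist Q' X = dist Q X.
Proof.
  rewrite !dist_sq. intros HP HX. unfold dist, vnorm. f_equal.
  unfold dot, vsub in *; cbn [fst snd] in *. lra.
Qed.

Lemma is_derive_dist_curve (gam : R -> pt) s0 w Q :
  is_derive (fun s => fst (gam s)) s0 (fst w) -> is_derive (fun s => snd (gam s)) s0 (snd w) ->
  gam s0 <> Q ->
  is_derive (fun s => dist (gam s) Q) s0 (dot (vsub (gam s0) Q) w / dist (gam s0) Q).
Proof.
  intros H1 H2 HQ.
  exact (is_derive_sqrt_sum_sq (fun s => fst (gam s) - fst Q) (fun s => snd (gam s) - snd Q) s0
    _ _ (is_derive_sub_const _ _ _ _ H1) (is_derive_sub_const _ _ _ _ H2)
    (dot_self_pos _ (vsub_neq0 _ _ HQ))).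
Qed.

Lemma tangent_vec_level_set K P w (phi : pt -> R) c l : tangent_vec K P w ->
  (forall X, K X -> phi X = c) ->
  (forall gam : R -> pt, gam 0 = P ->
     is_derive (fun s => fst (gam s)) 0 (fst w) ->
     is_derive (fun s => snd (gam s)) 0 (snd w) ->
     is_derive (fun s => phi (gam s)) 0 l) ->
  l = 0.
Proof.
  intros (_ & gam & eps & Heps & HK & H0 & Hw1 & Hw2) Hlevel Hd.
  apply (is_derive_eq0_on_const (fun s => phi (gam s)) 0 (eps / 2) 0); [lra | lra | | auto].
  intros s Hs. rewrite !Hlevel; [reflexivity | apply HK ..].
  - rewrite Rabs_R0. exact Heps.
  - rewrite Rabs_pos_eq; lra.
Qed.

Lemma orthogonal_to_basis_eq0 x1 x2 v1 v2 d1 d2 :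
  x1 * d1 + x2 * d2 = 0 -> v1 * d1 + v2 * d2 = 0 -> x1 * v2 - x2 * v1 <> 0 ->
  d1 = 0 /\ d2 = 0.
Proof.
  intros Hx Hv Hc. split.
  - apply (Rmult_eq_reg_r (x1 * v2 - x2 * v1)); [| exact Hc].
    transitivity (v2 * (x1 * d1 + x2 * d2) - x2 * (v1 * d1 + v2 * d2)); [ring |].
    rewrite Hx, Hv. ring.
  - apply (Rmult_eq_reg_r (x1 * v2 - x2 * v1)); [| exact Hc].
    transitivity (x1 * (v1 * d1 + v2 * d2) - v1 * (x1 * d1 + x2 * d2)); [ring |].
    rewrite Hx, Hv. ring.
Qed.

Lemma dot_reflect_sym w a v : dot a (reflect w v) = dot (reflect w a) v.
Proof. unfold reflect, dot, Rdiv; cbn [fst snd]. ring. Qed.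

Lemma reflect_isometry w v : w <> (0, 0) -> dot (reflect w v) (reflect w v) = dot v v.
Proof.
  intros Hw. pose proof (dot_self_pos w Hw).
  unfold reflect, dot in *; cbn [fst snd] in *. field. lra.
Qed.

(* In the plane, w and a + b are both orthogonal to a - b <> 0, hence parallel. *)
Lemma reflect_swap w a b : w <> (0, 0) -> dot a a = dot b b ->
  dot w (vsub a b) = 0 -> a <> b -> reflect w a = b.
Proof.
  intros Hw Hab Hwd Hne. pose proof (dot_self_pos w Hw) as HW.
  destruct w as [w1 w2], a as [a1 a2], b as [b1 b2].
  unfold reflect, dot, vsub in *; cbn [fst snd] in *.
  set (cross := w1 * (a2 + b2) - w2 * (a1 + b1)).
  assert (Hc1 : (a1 - b1) * cross = 0).
  { replace ((a1 - b1) * cross) with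
      ((a2 + b2) * (w1 * (a1 - b1) + w2 * (a2 - b2))
       - w2 * (a1 * a1 + a2 * a2 - (b1 * b1 + b2 * b2))) by (unfold cross; ring).
    rewrite Hwd, Hab. ring. }
  assert (Hc2 : (a2 - b2) * cross = 0).
  { replace ((a2 - b2) * cross) with
      (w1 * (a1 * a1 + a2 * a2 - (b1 * b1 + b2 * b2))
       - (a1 + b1) * (w1 * (a1 - b1) + w2 * (a2 - b2))) by (unfold cross; ring).
    rewrite Hwd, Hab. ring. }
  assert (Hcross : cross = 0).
  { destruct (Req_dec a1 b1) as [E1 | E1]; destruct (Req_dec a2 b2) as [E2 | E2].
    - subst. congruence.
    - apply Rmult_integral in Hc2. lra.
    - apply Rmult_integral in Hc1. lra.
    - apply Rmult_integral in Hc1. lra. }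
  assert (E1 : 2 * (a1 * w1 + a2 * w2) * w1 - (w1 * w1 + w2 * w2) * (a1 + b1)
               = w1 * (w1 * (a1 - b1) + w2 * (a2 - b2)) + w2 * cross) by (unfold cross; ring).
  assert (E2 : 2 * (a1 * w1 + a2 * w2) * w2 - (w1 * w1 + w2 * w2) * (a2 + b2)
               = w2 * (w1 * (a1 - b1) + w2 * (a2 - b2)) - w1 * cross) by (unfold cross; ring).
  rewrite Hwd, Hcross in E1, E2.
  f_equal; field_simplify_eq; lra.
Qed.

Lemma reflect_dot_mul_invariant w a b v : w <> (0, 0) -> dot a a = dot b b ->
  dot w (vsub a b) = 0 -> a <> b ->
  dot a (reflect w v) * dot b (reflect w v) = dot a v * dot b v.
Proof.
  intros Hw Hab Hwd Hne.
  assert (Hwd' : dot w (vsub b a) = 0) by (unfold dot, vsub in *; cbn [fst snd] in *; lra).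
  rewrite !dot_reflect_sym, (reflect_swap w a b), (reflect_swap w b a); auto.
  ring.
Qed.

(** * Kepler arcs and their second foci *)

Definition lrl (k : R) (x v : pt) : pt :=
  vsub (vsub (scale (dot v v) x) (scale (dot x v) v)) (scale (k / vnorm x) x).

Definition kepler_focus (k E : R) (F P v : pt) : pt :=
  vadd F (scale (/ E) (lrl k (vsub P F) v)).

Lemma lrl_focus_unique k E x v q : k <> 0 -> E <> 0 -> x <> (0, 0) ->
  dot (vsub x q) (vsub x q) = (vnorm x + k / E) ^ 2 ->
  k / E * dot x v / vnorm x + dot v q = 0 ->
  k / E * (dot v v * vnorm x ^ 2 - k * dot x x / vnorm x - dot x v ^ 2) - k * dot x q = 0 ->
  q = scale (/ E) (lrl k x v).
Proof.
  intros Hk HE Hx Hconic H1 H2.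
  assert (Hr : 0 < vnorm x) by (apply sqrt_lt_R0, dot_self_pos, Hx).
  assert (Hrr : vnorm x ^ 2 = dot x x) by (apply pow2_sqrt; unfold dot; nra).
  destruct x as [x1 x2], v as [v1 v2], q as [q1 q2].
  unfold lrl, scale, vsub, dot in *; cbn [fst snd] in *.
  set (r := vnorm (x1, x2)) in *. set (m := k / E) in *.
  set (d1 := q1 - / E * ((v1 * v1 + v2 * v2) * x1 - (x1 * v1 + x2 * v2) * v1 - k / r * x1)).
  set (d2 := q2 - / E * ((v1 * v1 + v2 * v2) * x2 - (x1 * v1 + x2 * v2) * v2 - k / r * x2)).
  assert (Hxd : x1 * d1 + x2 * d2 = 0).
  { apply (Rmult_eq_reg_l k); [| exact Hk].
    rewrite Rmult_0_r, <- Ropp_0, <- H2, Hrr.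
    unfold d1, d2, m. field. lra. }
  assert (Hvd : v1 * d1 + v2 * d2 = 0).
  { rewrite <- H1. unfold d1, d2, m. field. lra. }
  set (cross := x1 * v2 - x2 * v1).
  destruct (Req_dec cross 0) as [Hc | Hc].
  - (* radial motion: q = -(m/r) x + d with d orthogonal to x, so the conic forces d = 0 *)
    assert (Hq1 : q1 = d1 - m * x1 / r).
    { unfold d1, m. replace ((v1 * v1 + v2 * v2) * x1 - (x1 * v1 + x2 * v2) * v1)
        with (v2 * cross) by (unfold cross; ring).
      rewrite Hc. field. lra. }
    assert (Hq2 : q2 = d2 - m * x2 / r).
    { unfold d2, m. replace ((v1 * v1 + v2 * v2) * x2 - (x1 * v1 + x2 * v2) * v2)
        with (- v1 * cross) by (unfold cross; ring).
      rewrite Hc. field. lra. }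
    assert (Hdd : d1 * d1 + d2 * d2 =
      (x1 - q1) * (x1 - q1) + (x2 - q2) * (x2 - q2) - (r + m) ^ 2
      + 2 * (1 + m / r) * (x1 * d1 + x2 * d2) + (1 + m / r) ^ 2 * (r ^ 2 - (x1 * x1 + x2 * x2))).
    { rewrite Hq1, Hq2. field. lra. }
    rewrite Hconic, Hxd, Hrr in Hdd.
    assert (d1 = 0 /\ d2 = 0) as [Hd1 Hd2] by nra.
    f_equal; unfold d1, d2 in *; lra.
  - destruct (orthogonal_to_basis_eq0 x1 x2 v1 v2 d1 d2 Hxd Hvd Hc) as [Hd1 Hd2].
    f_equal; unfold d1, d2 in *; lra.
Qed.

Section KeplerArc.

Variables (k : R) (F : pt) (g : R -> pt).

Let g1 s := fst (g s).
Let g2 s := snd (g s).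
Let x1 s := g1 s - fst F.
Let x2 s := g2 s - snd F.
Let v1 s := Derive (fun u => g1 u) s.
Let v2 s := Derive (fun u => g2 u) s.
Let r s := dist (g s) F.

Lemma kepler_arc_derivatives t0 t1 : kepler_arc k F g t0 t1 ->
  exists a b, a < t0 /\ t1 < b /\ forall t, a < t < b ->
    g t <> F /\ r t ^ 2 = x1 t * x1 t + x2 t * x2 t /\
    is_derive x1 t (v1 t) /\ is_derive x2 t (v2 t) /\
    is_derive v1 t (- k * x1 t / r t ^ 3) /\ is_derive v2 t (- k * x2 t / r t ^ 3) /\
    is_derive r t ((x1 t * v1 t + x2 t * v2 t) / r t).
Proof.
  intros (a & b & Ha & Hb & Harc). exists a, b. split; [exact Ha | split; [exact Hb |]].
  intros t Ht. destruct (Harc t Ht) as (HF & Hd1 & Hd2 & Hv1 & Hv2).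
  assert (Hx1 : is_derive x1 t (v1 t)) by (unfold x1, v1; derive_from_hyps; ring).
  assert (Hx2 : is_derive x2 t (v2 t)) by (unfold x2, v2; derive_from_hyps; ring).
  refine (conj HF (conj (dist_sq (g t) F) (conj Hx1 (conj Hx2 (conj Hv1 (conj Hv2 _)))))).
  exact (is_derive_sqrt_sum_sq x1 x2 t _ _ Hx1 Hx2 (dot_self_pos _ (vsub_neq0 _ _ HF))).
Qed.

Lemma energy_const_on_arc t0 t1 : kepler_arc k F g t0 t1 ->
  forall t, t0 <= t <= t1 -> energy k F g t = energy k F g t0.
Proof.
  intros Harc. destruct (kepler_arc_derivatives _ _ Harc) as (a & b & Ha & Hb & Hd).
  apply const_of_is_derive_eq0. intros t Ht.
  destruct (Hd t ltac:(lra)) as (HF & _ & _ & _ & Hv1 & Hv2 & Hdr).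
  assert (Hr : 0 < r t) by exact (dist_pos _ _ HF).
  change (is_derive (fun s => (v1 s * v1 s + v2 s * v2 s) / 2 - k / r s) t 0).
  derive_from_hyps. field. lra.
Qed.

Lemma energy_pos_of_repulsive t0 t1 : kepler_arc k F g t0 t1 -> t0 <= t1 -> k < 0 ->
  0 < energy k F g t0.
Proof.
  intros (a & b & Ha & Hb & Harc) H01 Hk.
  destruct (Harc t0 ltac:(lra)) as [HF _].
  pose proof (dist_pos _ _ HF).
  assert (0 < - k / dist (g t0) F) by (apply Rdiv_lt_0_compat; lra).
  unfold energy, dot, Rdiv in *. nra.
Qed.

Lemma conic_focus_eq_kepler_focus E Q t0 t1 T : k <> 0 -> E <> 0 ->
  kepler_arc k F g t0 t1 -> t0 < t1 -> t0 <= T <= t1 ->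
  (forall t, t0 <= t <= t1 -> dist (g t) Q ^ 2 = (dist (g t) F + k / E) ^ 2) ->
  Q = kepler_focus k E F (g T) (vel g T).
Proof.
  intros Hk HE Harc H01 HT Hconic.
  destruct (kepler_arc_derivatives _ _ Harc) as (a & b & Ha & Hb & Hd).
  set (q1 := fst Q - fst F); set (q2 := snd Q - snd F).
  pose (L s := k / E * r s + x1 s * q1 + x2 s * q2).
  pose (D s := k / E * (x1 s * v1 s + x2 s * v2 s) / r s + (v1 s * q1 + v2 s * q2)).
  (* expanding the conic equation gives 2 L = |q|^2 - (k/E)^2 along the arc, so L is constant;
     D = L' and D' at T are the contact conditions of [lrl_focus_unique] *)
  assert (HL : forall s, t0 <= s <= t1 -> L s = L T).
  { assert (H2L : forall s, t0 <= s <= t1 -> 2 * L s = q1 ^ 2 + q2 ^ 2 - (k / E) ^ 2).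
    { intros s Hs. destruct (Hd s ltac:(lra)) as (_ & Hrr & _).
      specialize (Hconic s Hs). rewrite dist_sq in Hconic.
      unfold L, x1, x2, g1, g2, r, q1, q2 in *. unfold dot, vsub in Hconic. cbn [fst snd] in *.
      nra. }
    intros s Hs. pose proof (H2L s Hs). pose proof (H2L T HT). lra. }
  assert (HD : forall s, t0 <= s <= t1 -> is_derive L s (D s)).
  { intros s Hs. destruct (Hd s ltac:(lra)) as (HF & _ & Hx1 & Hx2 & _ & _ & Hdr).
    assert (Hr : 0 < r s) by exact (dist_pos _ _ HF).
    unfold L, D. derive_from_hyps. field. lra. }
  destruct (Hd T ltac:(lra)) as (HF & _ & Hx1 & Hx2 & Hv1 & Hv2 & Hdr).
  assert (Hr : 0 < r T) by exact (dist_pos _ _ HF).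
  pose (C := k / E * ((v1 T * v1 T + v2 T * v2 T) * r T ^ 2
                       - k * (x1 T * x1 T + x2 T * x2 T) / r T - (x1 T * v1 T + x2 T * v2 T) ^ 2)
             - k * (x1 T * q1 + x2 T * q2)).
  assert (HDD : is_derive D T (C / r T ^ 3)) by (unfold D, C; derive_from_hyps; field; lra).
  destruct (is_derive2_eq0_on_const L D t0 t1 T _ H01 HT HL HD HDD) as [HD0 HD2].
  assert (HC : C = 0).
  { apply (Rmult_eq_reg_r (/ r T ^ 3)); [rewrite Rmult_0_l; exact HD2 |].
    apply Rinv_neq_0_compat, pow_nonzero. lra. }
  assert (Hq : vsub Q F = scale (/ E) (lrl k (vsub (g T) F) (vel g T))).
  { apply lrl_focus_unique; [exact Hk | exact HE | apply vsub_neq0, HF | | exact HD0 | exact HC].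
    change (vnorm (vsub (g T) F)) with (dist (g T) F).
    rewrite <- (Hconic T HT), dist_sq. unfold dot, vsub; cbn [fst snd]. ring. }
  unfold kepler_focus. rewrite <- Hq. destruct Q as [Q1 Q2]. unfold vadd, vsub; cbn [fst snd].
  f_equal; ring.
Qed.

End KeplerArc.

Lemma second_focus_conic k F E g t0 t1 Q : k <> 0 -> E <> 0 -> (k < 0 -> 0 < E) ->
  second_focus k F E g t0 t1 Q ->
  forall t, t0 <= t <= t1 -> dist (g t) Q ^ 2 = (dist (g t) F + k / E) ^ 2.
Proof.
  intros Hk HE Hsign Hsf t Ht. destruct (Hsf t Ht) as (Hell & Hatt & Hrep).
  unfold semi_major in *.
  destruct (Rlt_or_le E 0) as [HEn | HEp]; [| destruct (Rlt_or_le k 0) as [Hkn | Hkp]].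
  - assert (Hkp : 0 < k) by (destruct (Rlt_or_le k 0) as [Hkn | ]; [specialize (Hsign Hkn) |]; lra).
    specialize (Hell HEn). rewrite Rabs_pos_eq, Rabs_left in Hell by lra.
    assert (2 * (k / (2 * - E)) = - (k / E)) by (field; lra).
    replace (dist (g t) Q) with (- (dist (g t) F + k / E)) by lra. ring.
  - specialize (Hrep ltac:(lra) Hkn). rewrite Rabs_left, Rabs_pos_eq in Hrep by lra.
    assert (2 * (- k / (2 * E)) = - (k / E)) by (field; lra).
    replace (dist (g t) Q) with (dist (g t) F + k / E) by lra. reflexivity.
  - specialize (Hatt ltac:(lra) ltac:(lra)). rewrite !Rabs_pos_eq in Hatt by lra.
    assert (2 * (k / (2 * E)) = k / E) by (field; lra).
    replace (dist (g t) Q) with (dist (g t) F + k / E) by lra. reflexivity.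
Qed.

Lemma kepler_focus_sub k E F P v v' : dot v v = dot v' v' ->
  vsub (kepler_focus k E F P v) (kepler_focus k E F P v')
  = scale (/ E) (vsub (scale (dot (vsub P F) v') v') (scale (dot (vsub P F) v) v)).
Proof.
  intros Hvv. unfold kepler_focus, lrl. rewrite Hvv.
  set (p := dot (vsub P F) v); set (p' := dot (vsub P F) v').
  unfold vadd, vsub, scale; cbn [fst snd]. f_equal; ring.
Qed.

Lemma kepler_focus_dot_invariant k E F P n v v' : dot v v = dot v' v' ->
  dot (vsub P F) v' * dot n v' = dot (vsub P F) v * dot n v ->
  dot (kepler_focus k E F P v') n = dot (kepler_focus k E F P v) n.
Proof.
  intros Hvv Hinv.
  pose proof (kepler_focus_sub k E F P v' v (eq_sym Hvv)) as Hsub.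
  set (Q := kepler_focus k E F P v) in *; set (Q' := kepler_focus k E F P v') in *.
  assert (Hdiff : dot (vsub Q' Q) n
                  = / E * (dot (vsub P F) v * dot n v - dot (vsub P F) v' * dot n v')).
  { rewrite Hsub. set (p := dot (vsub P F) v); set (p' := dot (vsub P F) v').
    unfold scale, vsub, dot; cbn [fst snd]. ring. }
  rewrite Hinv, Rminus_diag, Rmult_0_r in Hdiff.
  unfold dot, vsub in Hdiff |- *; cbn [fst snd] in *. lra.
Qed.

Lemma kepler_focus_dist_invariant k E F F' P v v' : dot v v = dot v' v' ->
  dot (vsub P F) v' * dot (vsub F' P) v' = dot (vsub P F) v * dot (vsub F' P) v ->
  dist P (kepler_focus k E F P v') ^ 2 = dist P (kepler_focus k E F P v) ^ 2 ->
  dist (kepler_focus k E F P v') F' = dist (kepler_focus k E F P v) F'.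
Proof.
  intros Hvv Hinv HP. apply (dist_eq_of_perp_bisector P); [exact HP |].
  rewrite (kepler_focus_sub k E F P v' v (eq_sym Hvv)).
  set (p := dot (vsub P F) v) in *; set (p' := dot (vsub P F) v') in *.
  transitivity (/ E * (p * dot (vsub F' P) v - p' * dot (vsub F' P) v')).
  - unfold scale, vsub, dot; cbn [fst snd]. ring.
  - rewrite Hinv. ring.
Qed.

(** * Conic walls *)

Lemma focal_conic_of_wall F F' K : ellipse_wall F F' K \/ hyperbola_branch_wall F F' K ->
  exists sg c, sg * sg = 1 /\ dist F F' ^ 2 <> c ^ 2 /\
    forall X, K X -> dist X F + sg * dist X F' = c.
Proof.
  assert (Hd : 0 <= dist F F') by apply sqrt_pos.
  intros [(b & Hlt & HK) | (b & Hb & Hlt & [HK | HK])].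
  - exists 1, (2 * b). split; [ring | split; [nra |]].
    intros X HX. rewrite Rmult_1_l. apply HK, HX.
  - exists (-1), (2 * b). split; [ring | split; [nra |]].
    intros X HX. apply HK in HX. lra.
  - exists (-1), (- (2 * b)). split; [ring | split; [nra |]].
    intros X HX. apply HK in HX. lra.
Qed.

Lemma focal_conic_tangent K F F' sg c P w :
  (forall X, K X -> dist X F + sg * dist X F' = c) -> P <> F -> P <> F' -> tangent_vec K P w ->
  dot (vsub P F) w / dist P F + sg * (dot (vsub P F') w / dist P F') = 0.
Proof.
  intros HK HF HF' Htan.
  apply (tangent_vec_level_set K P w (fun X => dist X F + sg * dist X F') c);
    [exact Htan | exact HK |].
  intros gam H0 H1 H2. rewrite <- H0 in HF, HF' |- *.
  pose (d s := dist (gam s) F); pose (d' s := dist (gam s) F').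
  pose proof (is_derive_dist_curve gam 0 w F H1 H2 HF) as Hd.
  pose proof (is_derive_dist_curve gam 0 w F' H1 H2 HF') as Hd'.
  change (is_derive d 0 (dot (vsub (gam 0) F) w / d 0)) in Hd.
  change (is_derive d' 0 (dot (vsub (gam 0) F') w / d' 0)) in Hd'.
  change (is_derive (fun s => d s + sg * d' s) 0
    (dot (vsub (gam 0) F) w / d 0 + sg * (dot (vsub (gam 0) F') w / d' 0))).
  derive_from_hyps. ring.
Qed.

Lemma dist_foci_of_aligned F F' P sg : sg * sg = 1 -> P <> F ->
  scale (dist P F') (vsub P F) = scale (sg * dist P F) (vsub F' P) ->
  dist F F' ^ 2 = (dist P F + sg * dist P F') ^ 2.
Proof.
  intros Hsg HF Heq.
  pose proof (dist_pos _ _ HF) as Hr. pose proof (dist_sq P F) as Hrr. rewrite dist_sq.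
  set (r := dist P F) in *; set (r' := dist P F') in *.
  unfold scale, vsub, dot in *; cbn [fst snd] in *. injection Heq as E1 E2.
  assert (A1 : r * (fst F' - fst F) = (r + sg * r') * (fst P - fst F)).
  { transitivity (r * (fst P - fst F) + sg * (sg * r * (fst F' - fst P))).
    - replace (sg * (sg * r * (fst F' - fst P))) with (sg * sg * r * (fst F' - fst P)) by ring.
      rewrite Hsg. ring.
    - rewrite <- E1. ring. }
  assert (A2 : r * (snd F' - snd F) = (r + sg * r') * (snd P - snd F)).
  { transitivity (r * (snd P - snd F) + sg * (sg * r * (snd F' - snd P))).
    - replace (sg * (sg * r * (snd F' - snd P))) with (sg * sg * r * (snd F' - snd P)) by ring.
      rewrite Hsg. ring.
    - rewrite <- E2. ring. }
  apply (Rmult_eq_reg_l (r ^ 2)); [| apply pow_nonzero; lra].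
  replace (r ^ 2 * ((fst F - fst F') * (fst F - fst F') + (snd F - snd F') * (snd F - snd F')))
    with ((r * (fst F' - fst F)) ^ 2 + (r * (snd F' - snd F)) ^ 2) by ring.
  rewrite A1, A2, Hrr. ring.
Qed.

Lemma focal_conic_reflect_invariant F F' K sg c P w v : sg * sg = 1 ->
  dist F F' ^ 2 <> c ^ 2 -> (forall X, K X -> dist X F + sg * dist X F' = c) ->
  K P -> tangent_vec K P w ->
  dot (vsub P F) (reflect w v) * dot (vsub F' P) (reflect w v)
  = dot (vsub P F) v * dot (vsub F' P) v.
Proof.
  intros Hsg Hnd HK HP Htan. pose proof Htan as (Hw & _).
  pose proof (HK P HP) as HPc.
  assert (HF : P <> F).
  { intros ->. apply Hnd. rewrite <- HPc, dist_self.
    replace ((0 + sg * dist F F') ^ 2) with (sg * sg * dist F F' ^ 2) by ring.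
    rewrite Hsg. ring. }
  assert (HF' : P <> F').
  { intros ->. apply Hnd. rewrite <- HPc, dist_self, (dist_sym F' F). ring. }
  pose proof (focal_conic_tangent K F F' sg c P w HK HF HF' Htan) as Htg.
  pose proof (dist_pos _ _ HF) as Hr; pose proof (dist_pos _ _ HF') as Hr'.
  pose proof (dist_sq P F) as Hrr; pose proof (dist_sq P F') as Hrr'.
  set (r := dist P F) in *; set (r' := dist P F') in *.
  (* reflection in the tangent swaps the focal directions r' (P - F) and sg r (F' - P) *)
  set (a := scale r' (vsub P F)); set (b := scale (sg * r) (vsub F' P)).
  assert (Hab : dot a a = dot b b).
  { transitivity (r' ^ 2 * r ^ 2).
    - rewrite Hrr. unfold a, scale, dot, vsub; cbn [fst snd]. ring.
    - replace (dot b b) with (sg * sg * r ^ 2 * dot (vsub P F') (vsub P F'))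
        by (unfold b, scale, dot, vsub; cbn [fst snd]; ring).
      rewrite Hsg, <- Hrr'. ring. }
  assert (Hwab : dot w (vsub a b) = 0).
  { transitivity (r * r' * (dot (vsub P F) w / r + sg * (dot (vsub P F') w / r'))).
    - unfold a, b, scale, vsub, dot. cbn [fst snd]. field. lra.
    - rewrite Htg. ring. }
  assert (Hne : a <> b).
  { intros Heq. apply Hnd. rewrite <- HPc. exact (dist_foci_of_aligned F F' P sg Hsg HF Heq). }
  pose proof (reflect_dot_mul_invariant w a b v Hw Hab Hwab Hne) as Hinv.
  unfold a, b, scale, dot in Hinv |- *; cbn [fst snd] in *.
  apply (Rmult_eq_reg_l (sg * r * r')); [lra |].
  assert (sg <> 0) by (intros ->; lra).
  repeat apply Rmult_integral_contrapositive_currified; lra.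
Qed.

Lemma parabola_wall_sq F D n K X : parabola_wall F D n K -> K X ->
  dot (vsub X F) (vsub X F) * dot n n = dot (vsub X D) n ^ 2.
Proof.
  intros (Hn & _ & HK) HX. apply HK in HX.
  pose proof (dot_self_pos n Hn) as Hnn.
  assert (Hs : sqrt (dot n n) ^ 2 = dot n n) by (apply pow2_sqrt; lra).
  assert (0 < sqrt (dot n n)) by (apply sqrt_lt_R0; lra).
  rewrite <- dist_sq, HX, <- (pow2_abs (dot (vsub X D) n)). unfold vnorm.
  rewrite <- Hs at 2. field. lra.
Qed.

Lemma parabola_tangent F D n K P w : parabola_wall F D n K -> tangent_vec K P w ->
  dot (vsub P F) w * dot n n = dot (vsub P D) n * dot w n.
Proof.
  intros Hwall Htan.
  enough (2 * (dot (vsub P F) w * dot n n - dot (vsub P D) n * dot w n) = 0) by lra.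
  apply (tangent_vec_level_set K P w
    (fun X => dot (vsub X F) (vsub X F) * dot n n - dot (vsub X D) n ^ 2) 0); [exact Htan | |].
  - intros X HX. rewrite (parabola_wall_sq F D n K X Hwall HX). ring.
  - intros gam H0 H1 H2. subst P.
    pose (g1 s := fst (gam s)); pose (g2 s := snd (gam s)).
    change (is_derive g1 0 (fst w)) in H1. change (is_derive g2 0 (snd w)) in H2.
    change (is_derive (fun s => ((g1 s - fst F) * (g1 s - fst F) + (g2 s - snd F) * (g2 s - snd F))
        * dot n n - ((g1 s - fst D) * fst n + (g2 s - snd D) * snd n) ^ 2) 0
      (2 * (dot (vsub (gam 0) F) w * dot n n - dot (vsub (gam 0) D) n * dot w n))).
    derive_from_hyps. unfold dot, vsub, g1, g2; cbn [fst snd]. ring.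
Qed.

Lemma parabola_reflect_invariant F D n K P w v : parabola_wall F D n K -> K P ->
  tangent_vec K P w ->
  dot (vsub P F) (reflect w v) * dot n (reflect w v) = dot (vsub P F) v * dot n v.
Proof.
  intros Hwall HP Htan.
  pose proof Hwall as (Hn & HFD & _). pose proof Htan as (Hw & _).
  pose proof (dot_self_pos n Hn) as Hnn.
  pose proof (parabola_wall_sq F D n K P Hwall HP) as Hsq.
  pose proof (parabola_tangent F D n K P w Hwall Htan) as Htg.
  set (B := dot (vsub P D) n) in *.
  assert (HB : B <> 0).
  { intros HB0. apply HFD.
    assert (Ha0 : dot (vsub P F) (vsub P F) = 0).
    { apply (Rmult_eq_reg_r (dot n n)); [rewrite Hsq, HB0; ring | lra]. }
    replace (dot (vsub F D) n) with (B - dot (vsub P F) n)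
      by (unfold B, dot, vsub; cbn [fst snd]; ring).
    unfold dot, vsub in *; cbn [fst snd] in *.
    destruct (Rplus_sqr_eq_0 _ _ Ha0) as [E1 E2].
    rewrite HB0, E1, E2. ring. }
  (* reflection in the tangent swaps P - F with its projection (B/|n|^2) n on the axis *)
  set (a := vsub P F) in *; set (b := scale (B / dot n n) n).
  assert (Hab : dot a a = dot b b).
  { apply (Rmult_eq_reg_r (dot n n)); [| lra]. rewrite Hsq.
    unfold b, scale, dot; cbn [fst snd]. field. unfold dot in Hnn; lra. }
  assert (Hwab : dot w (vsub a b) = 0).
  { apply (Rmult_eq_reg_r (dot n n)); [| lra]. rewrite Rmult_0_l.
    replace (dot w (vsub a b) * dot n n) with (dot a w * dot n n - B * dot w n).
    - rewrite Htg. ring.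
    - unfold a, b, scale, vsub, dot in *; cbn [fst snd] in *. field. lra. }
  assert (Hne : a <> b).
  { intros Heq. apply HFD.
    replace (dot (vsub F D) n) with (B - dot a n) by (unfold B, a, dot, vsub; cbn [fst snd]; ring).
    rewrite Heq. unfold b, scale, dot in *; cbn [fst snd] in *. field. lra. }
  pose proof (reflect_dot_mul_invariant w a b v Hw Hab Hwab Hne) as Hinv.
  unfold b, scale, dot in Hinv |- *; cbn [fst snd] in *.
  apply (Rmult_eq_reg_l (B / dot n n)); [unfold dot; lra |].
  unfold Rdiv. apply Rmult_integral_contrapositive_currified; [exact HB |].
  apply Rinv_neq_0_compat. lra.
Qed.

(** * Billiard trajectories *)

Lemma billiard_energy k F K N t g : billiard_traj k F K N t g ->
  forall i, (i <= N)%nat -> energy k F (g i) (t i) = energy k F (g 0%nat) (t 0%nat).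
Proof.
  intros [Harcs Himpacts] i. induction i as [| i IH]; intros Hi; [reflexivity |].
  destruct (Himpacts i ltac:(lia)) as (Hpos & _ & w & (Hw & _) & Hv).
  destruct (Harcs i ltac:(lia)) as (Hlt & Harc & _).
  rewrite <- IH by lia.
  rewrite <- (energy_const_on_arc k F (g i) (t i) (t (S i)) Harc (t (S i))) by lra.
  unfold energy. rewrite Hv, reflect_isometry, Hpos by exact Hw. reflexivity.
Qed.

Lemma billiard_impact k F K N t g Fs i : k <> 0 -> billiard_traj k F K N t g ->
  energy k F (g 0%nat) (t 0%nat) <> 0 ->
  (forall j, (j <= N)%nat ->
     second_focus k F (energy k F (g j) (t j)) (g j) (t j) (t (S j)) (Fs j)) ->
  (i < N)%nat ->
  let E := energy k F (g 0%nat) (t 0%nat) in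
  let P := g i (t (S i)) in
  let v := vel (g i) (t (S i)) in
  exists w, K P /\ tangent_vec K P w /\
    Fs i = kepler_focus k E F P v /\ Fs (S i) = kepler_focus k E F P (reflect w v) /\
    dist P (Fs (S i)) ^ 2 = dist P (Fs i) ^ 2.
Proof.
  intros Hk Htraj HE Hsf Hi E P v.
  pose proof (billiard_energy k F K N t g Htraj) as Henergy.
  destruct Htraj as [Harcs Himpacts].
  destruct (Himpacts i Hi) as (Hpos & HK & w & Htan & Hv).
  destruct (Harcs i ltac:(lia)) as (Hlt & Harc & _).
  destruct (Harcs (S i) ltac:(lia)) as (Hlt' & Harc' & _).
  assert (Hsign : k < 0 -> 0 < E).
  { intros Hkn. destruct (Harcs 0%nat ltac:(lia)) as (Hlt0 & Harc0 & _).
    exact (energy_pos_of_repulsive k F (g 0%nat) _ _ Harc0 ltac:(lra) Hkn). }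
  assert (Hconic : forall j, (j <= N)%nat -> forall s, t j <= s <= t (S j) ->
            dist (g j s) (Fs j) ^ 2 = (dist (g j s) F + k / E) ^ 2).
  { intros j Hj. apply (second_focus_conic k F E (g j) (t j) (t (S j))); auto.
    unfold E. rewrite <- (Henergy j Hj). apply Hsf, Hj. }
  exists w. split; [exact HK | split; [exact Htan | split; [| split]]].
  - exact (conic_focus_eq_kepler_focus k F (g i) E (Fs i) (t i) (t (S i)) (t (S i))
             Hk HE Harc Hlt ltac:(lra) (Hconic i ltac:(lia))).
  - unfold P, v. rewrite <- Hv, Hpos.
    exact (conic_focus_eq_kepler_focus k F (g (S i)) E (Fs (S i)) (t (S i)) (t (S (S i))) (t (S i))
             Hk HE Harc' Hlt' ltac:(lra) (Hconic (S i) ltac:(lia))).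
  - unfold P. rewrite (Hconic i ltac:(lia)) by lra. rewrite Hpos, (Hconic (S i) ltac:(lia)) by lra.
    reflexivity.
Qed.

Lemma focal_wall_step k F F' K N t g Fs : k <> 0 ->
  (ellipse_wall F F' K \/ hyperbola_branch_wall F F' K) ->
  billiard_traj k F K N t g -> energy k F (g 0%nat) (t 0%nat) <> 0 ->
  (forall i, (i <= N)%nat ->
     second_focus k F (energy k F (g i) (t i)) (g i) (t i) (t (S i)) (Fs i)) ->
  forall i, (i < N)%nat -> dist (Fs (S i)) F' = dist (Fs i) F'.
Proof.
  intros Hk Hwall Htraj HE Hsf i Hi.
  destruct (billiard_impact k F K N t g Fs i Hk Htraj HE Hsf Hi)
    as (w & HK & Htan & Hfoc & Hfoc' & Hdist).
  destruct (focal_conic_of_wall F F' K Hwall) as (sg & c & Hsg & Hnd & Hlevel).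
  rewrite Hfoc, Hfoc' in *.
  apply kepler_focus_dist_invariant; [| | exact Hdist].
  - symmetry. apply reflect_isometry. apply Htan.
  - exact (focal_conic_reflect_invariant F F' K sg c _ w _ Hsg Hnd Hlevel HK Htan).
Qed.

Lemma parabola_wall_step k F D n K N t g Fs : k <> 0 -> parabola_wall F D n K ->
  billiard_traj k F K N t g -> energy k F (g 0%nat) (t 0%nat) <> 0 ->
  (forall i, (i <= N)%nat ->
     second_focus k F (energy k F (g i) (t i)) (g i) (t i) (t (S i)) (Fs i)) ->
  forall i, (i < N)%nat -> dot (Fs (S i)) n = dot (Fs i) n.
Proof.
  intros Hk Hwall Htraj HE Hsf i Hi.
  destruct (billiard_impact k F K N t g Fs i Hk Htraj HE Hsf Hi)
    as (w & HK & Htan & Hfoc & Hfoc' & _).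
  rewrite Hfoc, Hfoc'.
  apply kepler_focus_dot_invariant.
  - symmetry. apply reflect_isometry. apply Htan.
  - exact (parabola_reflect_invariant F D n K _ w _ Hwall HK Htan).
Qed.

Lemma invariant_of_steps {A : Type} (f : nat -> A) N :
  (forall i, (i < N)%nat -> f (S i) = f i) -> forall i, (i <= N)%nat -> f i = f 0%nat.
Proof.
  intros Hstep i. induction i as [| i IH]; intros Hi; [reflexivity |].
  rewrite Hstep by lia. apply IH. lia.
Qed.

Theorem mainTheorem1 :
  (forall (k : R) (F F' : pt) (K : pt -> Prop) (N : nat)
          (t : nat -> R) (g : nat -> R -> pt) (Fs : nat -> pt),
     k <> 0 ->
     (ellipse_wall F F' K \/ hyperbola_branch_wall F F' K) ->
     billiard_traj k F K N t g ->
     energy k F (g 0%nat) (t 0%nat) <> 0 ->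
     (forall i, (i <= N)%nat ->
        second_focus k F (energy k F (g i) (t i)) (g i) (t i) (t (S i)) (Fs i)) ->
     exists r, forall i, (i <= N)%nat -> dist (Fs i) F' = r)
  /\
  (forall (k : R) (F D n : pt) (K : pt -> Prop) (N : nat)
          (t : nat -> R) (g : nat -> R -> pt) (Fs : nat -> pt),
     k <> 0 ->
     parabola_wall F D n K ->
     billiard_traj k F K N t g ->
     energy k F (g 0%nat) (t 0%nat) <> 0 ->
     (forall i, (i <= N)%nat ->
        second_focus k F (energy k F (g i) (t i)) (g i) (t i) (t (S i)) (Fs i)) ->
     exists c, forall i, (i <= N)%nat -> dot (Fs i) n = c).
Proof.
  split.
  - intros k F F' K N t g Fs Hk Hwall Htraj HE Hsf.
    exists (dist (Fs 0%nat) F').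
    apply (invariant_of_steps (fun i => dist (Fs i) F')).
    exact (focal_wall_step k F F' K N t g Fs Hk Hwall Htraj HE Hsf).
  - intros k F D n K N t g Fs Hk Hwall Htraj HE Hsf.
    exists (dot (Fs 0%nat) n).
    apply (invariant_of_steps (fun i => dot (Fs i) n)).
    exact (parabola_wall_step k F D n K N t g Fs Hk Hwall Htraj HE Hsf).
Qed.
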